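(* Let $A=A_1\cdots A_n$ be a string over $\Sigma$, $\mathcal R\subseteq\Sigma\times\Sigma$, $B\ge1$, and let $G=(V,E)$ be the graph defined below. Then for every $i\in\{1,\dots,n\}$ and every $v\in V$, at least one of $V_{-v}\cap S_i=\emptyset$, $V_{+v}\cap S_i=\emptyset$, or $v\in S_i$ holds. Moreover, for every $v\in V$, the number of indices $i\in\{1,\dots,n\}$ with both $V_{-v}\cap S_i\ne\emptyset$ and $V_{+v}\cap S_i\neq\emptyset$ is at most $6B$.
   Context: An interval is a set of integers $[a,b]=\{a,\dots,b\}$ with $a\le b$, with endpoints $l([a,b])=a$, $r([a,b])=b$. A pseudo-interval is an interval or $\emptyset$. A pseudo-interval $I'$ is strictly inside an interval $I$ if $I'\subseteq I$ and $\{l(I),r(I)\}\cap I'=\emptyset$. A triple $(I,H,L)$ of pseudo-intervals is well-ordered if (a) $I\ne\emptyset$, $l(I)<r(I)$; (b) $H\neq\emptyset$, $l(H)<r(H)$; (c) $H$ and $L$ are strictly inside $I$; (d) $H\cap L=\emptyset$. For well-ordered triples, $(I,H,L)\preceq(I',H',L')$ iff $(I,H,L)=(I',H',L')$, or $I'\subseteq H$, or ($I=I'$, $H=H'$, $L=\emptyset$), or ($I=I'$, $H=H'$, $L\ne\emptyset\ne L'$, $r(L)<l(L')$); write $x\prec y$ if $x\preceq y$ and $x\neq y$. The vertex set $V$ consists of all lists $((I_1,H_1,L_1),\dots,(I_k,H_k,L_k))$ of well-ordered triples with $1\le k\le B$ such that: (i) $I_j\subseteq[0,n+1]$ and $H_j,L_j\subseteq[1,n]$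 for all $j$; (ii) $(A_{l(H_j)},A_{r(H_j)})\in\mathcal R$ for all $j$; (iii) $(A_{l(L_j)},A_{r(L_j)})\in\mathcal R$ for all $j$ with $L_j\ne\emptyset$; (iv) $I_{j'}\subseteq L_j$ for all $j<j'$. A list $v=(x_1,\dots,x_k)$ is lexicographically strictly smaller than $v'=(x'_1,\dots,x'_{k'})$ if $v$ is a proper prefix of $v'$, or $x_j\prec x'_j$ for the first index $j$ with $x_j\ne x'_j$. $E=\{(v,v'):v \text{ is lexicographically strictly smaller than } v'\}$. For $v\in V$, $V_{-v}=\{u\in V:(u,v)\in E\}$ and $V_{+v}=\{u\in V:(v,u)\in E\}$. For $i\in\{1,\dots,n\}$, $S_i$ is the set of vertices $((I_1,H_1,L_1),\dots,(I_k,H_k,L_k))\in V$ such that $i$ is an endpoint of at least one of the nonempty pseudo-intervals $I_1,H_1,L_1,\dots,I_k,H_k,L_k$. *)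

(* Intervals of integers are represented by pairs
   of naturals: all intervals in the vertex set lie in [0, n+1], so nat suffices. *)
From mathcomp Require Import all_boot.
Set Implicit Arguments. Unset Strict Implicit. Unset Printing Implicit Defensive.

(* A pseudo-interval: [Some (a,b)] is the interval [a,b] (well-formed when a <= b),
   [None] is the empty set. *)
Definition pint := option (nat * nat).

Definition pint_wf (p : pint) : Prop :=
  match p with Some (a, b) => a <= b | None => True end.

Definition pmem (x : nat) (p : pint) : Prop :=
  match p with Some (a, b) => a <= x <= b | None => False end.

Definition psub (p q : pint) : Prop := forall x, pmem x p -> pmem x q.

Definition lft (p : pint) : nat := match p with Some (a, _) => a | None => 0 end.
Definition rgt (p : pint) : nat := match p with Some (_, b) => b | None => 0 end.

Definition strictly_inside (p q : pint) : Prop :=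
  psub p q /\ ~ pmem (lft q) p /\ ~ pmem (rgt q) p.

Definition triple := (pint * pint * pint)%type.
Definition tI (t : triple) : pint := t.1.1.
Definition tH (t : triple) : pint := t.1.2.
Definition tL (t : triple) : pint := t.2.

Definition well_ordered (t : triple) : Prop :=
  let: (I0, H0, L0) := t in
  (pint_wf I0 /\ pint_wf H0 /\ pint_wf L0) /\
  (I0 <> None /\ lft I0 < rgt I0) /\
  (H0 <> None /\ lft H0 < rgt H0) /\
  (strictly_inside H0 I0 /\ strictly_inside L0 I0) /\
  (forall x, ~ (pmem x H0 /\ pmem x L0)).

Definition tle (x y : triple) : Prop :=
  let: (I0, H0, L0) := x in
  let: (I1, H1, L1) := y in
  x = y \/ psub I1 H0 \/ (I0 = I1 /\ H0 = H1 /\ L0 = None) \/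
  (I0 = I1 /\ H0 = H1 /\ L0 <> None /\ L1 <> None /\ rgt L0 < lft L1).

Definition tlt (x y : triple) : Prop := tle x y /\ x <> y.

Definition dummy_triple : triple := (None, None, None).

Definition lexlt (v v' : seq triple) : Prop :=
  (size v < size v' /\ v = take (size v) v') \/
  (exists j, [/\ j < size v, j < size v', take j v = take j v',
     nth dummy_triple v j <> nth dummy_triple v' j &
     tlt (nth dummy_triple v j) (nth dummy_triple v' j)]).

Section Graph.
Variables (Sigma : Type) (A : nat -> Sigma) (R : Sigma -> Sigma -> Prop) (n B : nat).

(* the vertex set V; list positions are 0-based (index j here = j+1 in the paper) *)
Definition inV (v : seq triple) : Prop :=
  [/\ 1 <= size v <= B,
      (forall j, j < size v -> well_ordered (nth dummy_triple v j)),
      (forall j, j < size v ->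
         let t := nth dummy_triple v j in
         [/\ psub (tI t) (Some (0, n.+1)), psub (tH t) (Some (1, n)),
             psub (tL t) (Some (1, n)),
             R (A (lft (tH t))) (A (rgt (tH t)))
           & (tL t <> None -> R (A (lft (tL t))) (A (rgt (tL t))))]) &
      (forall j j', j < j' -> j' < size v ->
         psub (tI (nth dummy_triple v j')) (tL (nth dummy_triple v j)))].

Definition edge (u v : seq triple) : Prop := lexlt u v.

Definition Vminus (v u : seq triple) : Prop := inV u /\ edge u v.
Definition Vplus (v u : seq triple) : Prop := inV u /\ edge v u.

Definition is_endpoint (i : nat) (p : pint) : Prop :=
  p <> None /\ (i = lft p \/ i = rgt p).

Definition inS (i : nat) (v : seq triple) : Prop :=
  inV v /\ exists j, j < size v /\
    let t := nth dummy_triple v j in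
    is_endpoint i (tI t) \/ is_endpoint i (tH t) \/ is_endpoint i (tL t).

End Graph.

(* Let i be an endpoint of no interval of v.  In a vertex every interval of a
   later triple lies in the L of every earlier one, so an endpoint i occurring at
   position p lies in L at all positions before p.  If u < v with i an endpoint
   in u, then at the first position j where u and v differ i still lies in the
   L of every earlier triple of v, and comparing the j-th triples under the order
   shows that i lies "below" the j-th triple of v: outside the interior of its I,
   or outside its H and left of a nonempty L.  Symmetrically, if v < w with i an
   endpoint in w, then i lies "above" v at the corresponding position: inside
   its H, or inside I and right of L.  Both positions are the first one where i
   leaves L, and at a single triple the two situations are incompatible.  Hence
   every i counted in the second claim is one of the 6 |v| <= 6B endpoints of v. *)

From mathcomp Require Import all_boot zify.
From Stdlib Require Import Classical.
Set Implicit Arguments. Unset Strict Implicit. Unset Printing Implicit Defensive.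

Local Notation tr v j := (nth dummy_triple v j).

Definition in_interior (x : nat) (p : pint) : Prop :=
  [/\ pmem x p, x <> lft p & x <> rgt p].

Lemma endpoint_mem i p : pint_wf p -> is_endpoint i p -> pmem i p.
Proof.
case: p => [[a b]|] /=; last by move=> _ [].
by rewrite /pmem /= => ab [_ [->|->]]; rewrite /lft /rgt /=; lia.
Qed.

Lemma lft_mem p : p <> None -> pint_wf p -> pmem (lft p) p.
Proof. by case: p => [[a b]|] //= _; rewrite /pmem /=; lia. Qed.

Lemma interior_of_strictly_inside p q x :
  strictly_inside p q -> pmem x p -> in_interior x q.
Proof.
move=> [sub [nl nr]] hx.
by split=> [|E|E]; [exact: sub | apply: nl | apply: nr]; rewrite -E.
Qed.

Lemma interior_psub p q x : psub p q -> in_interior x p -> in_interior x q.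
Proof.
case: p => [[a b]|] sub [hx hl hr] //.
have ha : pmem a (Some (a, b)) by move: hx; rewrite /pmem /=; lia.
have hb : pmem b (Some (a, b)) by move: hx; rewrite /pmem /=; lia.
move: (sub _ ha) (sub _ hb) hx hl hr; case: q {sub} => [[c d]|] //.
by rewrite /pmem /lft /rgt /= => *; split; rewrite /pmem /=; lia.
Qed.

Lemma lt_of_before p q x y : pmem x p -> pmem y q -> rgt p < lft q -> x < y.
Proof. by case: p q => [[a b]|] [[c d]|] //; rewrite /pmem /lft /rgt /=; lia. Qed.

Lemma well_ordered_inv t : well_ordered t ->
  [/\ pint_wf (tI t), pint_wf (tH t) & pint_wf (tL t)] /\
  [/\ strictly_inside (tH t) (tI t), strictly_inside (tL t) (tI t) &
      forall x, pmem x (tH t) -> ~ pmem x (tL t)].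
Proof.
case: t => [[I H] L] [[wI [wH wL]] [_ [_ [[sH sL] dj]]]].
by split; split=> // x hH hL; apply: (dj x).
Qed.

Definition endpoint_in (i : nat) (t : triple) : Prop :=
  is_endpoint i (tI t) \/ is_endpoint i (tH t) \/ is_endpoint i (tL t).

(* What an endpoint at a position p of a vertex leaves visible at positions <= p. *)
Definition touches (i : nat) (t : triple) : Prop :=
  is_endpoint i (tI t) \/ is_endpoint i (tH t) \/ pmem i (tL t).

Lemma touches_of_endpoint i t : well_ordered t -> endpoint_in i t -> touches i t.
Proof.
move=> /well_ordered_inv[[_ _ wL] _] [h|[h|h]]; [by left | by right; left |].
by right; right; exact: endpoint_mem.
Qed.

Lemma touches_mem i t : well_ordered t -> touches i t -> pmem i (tI t).
Proof.
move=> /well_ordered_inv[[wI wH _] [sH sL _]] [h|[h|h]].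
- exact: endpoint_mem.
- exact/(proj1 sH)/endpoint_mem.
- exact: (proj1 sL).
Qed.

Definition below_at (i : nat) (t : triple) : Prop :=
  ~ in_interior i (tI t) \/
  [/\ ~ pmem i (tH t), tL t <> None & forall x, pmem x (tL t) -> i < x].

Definition above_at (i : nat) (t : triple) : Prop :=
  pmem i (tH t) \/ (in_interior i (tI t) /\ forall x, pmem x (tL t) -> x < i).

Lemma below_at_notin_L i t : well_ordered t -> below_at i t -> ~ pmem i (tL t).
Proof.
move=> /well_ordered_inv[_ [_ sL _]] [hI|[_ _ hL]] hi.
- exact/hI/(interior_of_strictly_inside sL).
- by have := hL i hi; rewrite ltnn.
Qed.

Lemma above_at_notin_L i t : well_ordered t -> above_at i t -> ~ pmem i (tL t).
Proof.
move=> /well_ordered_inv[_ [_ _ dj]] [hH|[_ hL]] hi.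
- exact: dj hH hi.
- by have := hL i hi; rewrite ltnn.
Qed.

Lemma below_above_at i t : well_ordered t -> below_at i t -> above_at i t -> False.
Proof.
move=> /well_ordered_inv[[_ _ wL] [sH _ _]] [hI|[nH nL hL]] [hH|[hI' hL']].
- exact/hI/(interior_of_strictly_inside sH).
- exact: hI.
- exact: nH.
- by have := hL _ (lft_mem nL wL); have := hL' _ (lft_mem nL wL); lia.
Qed.

Lemma tlt_below t0 t1 i : well_ordered t0 -> tlt t0 t1 ->
  touches i t0 -> ~ is_endpoint i (tI t1) -> ~ is_endpoint i (tH t1) ->
  below_at i t1.
Proof.
move=> /well_ordered_inv[_ [sH0 _ dj0]].
case: t0 t1 sH0 dj0 => [[I0 H0] L0] [[I1 H1] L1].
rewrite /tlt /tle /touches /below_at /tI /tH /tL /= => sH0 dj0 [hle hne] hi nI nH.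
case: hle => [//|[sub|[[eI [eH eL]]|[eI [eH [_ [nL1 lt01]]]]]]]; last 2 first.
- by subst; case: hi => [/nI|[/nH|]].
- subst; right; have hL0 : pmem i L0 by case: hi => [/nI|[/nH|]].
  by split=> // [hH|x hx]; [exact: dj0 hH hL0 | exact: lt_of_before hL0 hx lt01].
left=> /(interior_psub sub) [hH hl hr].
case: hi => [[_ [E|E]]|[[_ [E|E]]|hL]] //.
- by case: sH0 => _ [+ _]; rewrite -E.
- by case: sH0 => _ [_]; rewrite -E.
- exact: dj0 hH hL.
Qed.

Lemma tlt_above t0 t1 i : well_ordered t1 -> tlt t0 t1 ->
  touches i t1 -> ~ is_endpoint i (tI t0) -> ~ is_endpoint i (tH t0) ->
  above_at i t0.
Proof.
move=> wo1 [hle hne] hi nI nH; have hI1 := touches_mem wo1 hi.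
move/well_ordered_inv: wo1 => [_ [_ sL1 _]].
case: t0 t1 hle hne hi nI nH hI1 sL1 => [[I0 H0] L0] [[I1 H1] L1].
rewrite /tle /touches /above_at /tI /tH /tL /= => hle hne hi nI nH hI1 sL1.
case: hle => [//|[sub|[[eI [eH eL]]|[eI [eH [_ [_ lt01]]]]]]]; first by left; exact: sub.
- subst; right; have hL1 : pmem i L1 by case: hi => [/nI|[/nH|]].
  by split=> [|x []]; exact: interior_of_strictly_inside sL1 hL1.
- subst; right; have hL1 : pmem i L1 by case: hi => [/nI|[/nH|]].
  split=> [|x hx]; first exact: interior_of_strictly_inside sL1 hL1.
  exact: lt_of_before hx hL1 lt01.
Qed.

Definition nested (v : seq triple) : Prop :=
  (forall j, j < size v -> well_ordered (tr v j)) /\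
  (forall j j', j < j' -> j' < size v -> psub (tI (tr v j')) (tL (tr v j))).

Lemma inV_nested Sigma (A : nat -> Sigma) R n B v : inV A R n B v -> nested v.
Proof. by case. Qed.

Definition has_endpoint (i : nat) (v : seq triple) : Prop :=
  exists j, j < size v /\ endpoint_in i (tr v j).

Lemma nested_touches v i p j : nested v -> j <= p -> p < size v ->
  endpoint_in i (tr v p) ->
  touches i (tr v j) /\ forall q, q < j -> pmem i (tL (tr v q)).
Proof.
move=> [wo sub] hjp hp hi.
have hI := touches_mem (wo p hp) (touches_of_endpoint (wo p hp) hi).
have inL q : q < p -> pmem i (tL (tr v q)) by move=> hq; exact: sub q p hq hp i hI.
split=> [|q hq]; last by apply: inL; lia.
have [->|ne_jp] := eqVneq j p; first exact: touches_of_endpoint (wo p hp) hi.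
by right; right; apply: inL; lia.
Qed.

Lemma nth_eq_of_take_eq (u v : seq triple) j q :
  take j u = take j v -> q < j -> tr u q = tr v q.
Proof. by move=> E hq; rewrite -(nth_take _ hq u) E nth_take. Qed.

Definition below (i : nat) (v : seq triple) : Prop :=
  exists j, [/\ j < size v, forall q, q < j -> pmem i (tL (tr v q)) &
                below_at i (tr v j)].

Definition above (i : nat) (v : seq triple) : Prop :=
  exists j, [/\ j <= size v, forall q, q < j -> pmem i (tL (tr v q)) &
                j < size v -> above_at i (tr v j)].

Lemma nested_below_above i v : nested v -> below i v -> above i v -> False.
Proof.
move=> [wo _] [j [hj inL hb]] [k [hk inL' ha]].
case: (ltngtP j k) => [hjk|hkj|ejk].
- exact: below_at_notin_L (wo j hj) hb (inL' j hjk).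
- have hk' : k < size v by lia.
  exact: above_at_notin_L (wo k hk') (ha hk') (inL k hkj).
- by subst k; exact: below_above_at (wo j hj) hb (ha hj).
Qed.

Lemma endpoint_beyond_common_prefix u v i j p :
  take j u = take j v -> j <= size v -> p < size u ->
  endpoint_in i (tr u p) -> ~ has_endpoint i v -> j <= p.
Proof.
move=> E hj hp hi nE; rewrite leqNgt; apply/negP => hpj.
by apply: nE; exists p; split; [lia | rewrite -(nth_eq_of_take_eq E hpj)].
Qed.

Lemma not_endpoint_at i v j : ~ has_endpoint i v -> j < size v ->
  ~ is_endpoint i (tI (tr v j)) /\ ~ is_endpoint i (tH (tr v j)).
Proof.
by move=> nE hj; split=> h; apply: nE; exists j; split=> //; [left | right; left].
Qed.

Lemma lexlt_below u v i : nested u -> lexlt u v ->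
  has_endpoint i u -> ~ has_endpoint i v -> below i v.
Proof.
move=> nu [[hs E]|[j [hju hjv ht _ hlt]]] [p [hp hi]] nE.
  have Eu : take (size u) u = take (size u) v by rewrite take_size -E.
  by have := endpoint_beyond_common_prefix Eu (ltnW hs) hp hi nE; lia.
have hjp := endpoint_beyond_common_prefix ht (ltnW hjv) hp hi nE.
have [hj inL] := nested_touches nu hjp hp hi.
have [nI nH] := not_endpoint_at nE hjv.
exists j; split=> // [q hq|]; first by rewrite -(nth_eq_of_take_eq ht hq); exact: inL.
exact: tlt_below (nu.1 j hju) hlt hj nI nH.
Qed.

Lemma lexlt_above v w i : nested w -> lexlt v w ->
  has_endpoint i w -> ~ has_endpoint i v -> above i v.
Proof.
move=> nw [[hs E]|[j [hjv hjw ht _ hlt]]] [p [hp hi]] nE.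
  have Ev : take (size v) w = take (size v) v by rewrite take_size -E.
  have hvp := endpoint_beyond_common_prefix Ev (leqnn _) hp hi nE.
  have [_ inL] := nested_touches nw hvp hp hi.
  exists (size v); split=> // [q hq|]; last by rewrite ltnn.
  by rewrite {1}E nth_take //; exact: inL.
have hjp := endpoint_beyond_common_prefix (esym ht) (ltnW hjv) hp hi nE.
have [hj inL] := nested_touches nw hjp hp hi.
have [nI nH] := not_endpoint_at nE hjv.
exists j; split=> // [|q hq|_]; first exact: ltnW.
  by rewrite (nth_eq_of_take_eq ht hq); exact: inL.
exact: tlt_above (nw.1 j hjw) hlt hj nI nH.
Qed.

Lemma has_endpoint_between u v w i : nested u -> nested v -> nested w ->
  lexlt u v -> lexlt v w -> has_endpoint i u -> has_endpoint i w ->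
  has_endpoint i v.
Proof.
move=> nu nv nw huv hvw hu hw; apply: NNPP => nE.
exact: nested_below_above nv (lexlt_below nu huv hu nE) (lexlt_above nw hvw hw nE).
Qed.

Lemma inS_between Sigma (A : nat -> Sigma) R n B i u v w :
  inV A R n B v -> Vminus A R n B v u -> inS A R n B i u ->
  Vplus A R n B v w -> inS A R n B i w -> inS A R n B i v.
Proof.
move=> hv [hu huv] [_ hiu] [hw hvw] [_ hiw]; split=> //.
exact: has_endpoint_between (inV_nested hu) (inV_nested hv) (inV_nested hw)
  huv hvw hiu hiw.
Qed.

Definition triple_endpoints (t : triple) : seq nat :=
  [:: lft (tI t); rgt (tI t); lft (tH t); rgt (tH t); lft (tL t); rgt (tL t)].

Definition endpoints (v : seq triple) : seq nat := flatten (map triple_endpoints v).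

Lemma size_endpoints v : size (endpoints v) = 6 * size v.
Proof. by elim: v => //= t v; rewrite /endpoints => ->; lia. Qed.

Lemma has_endpoint_mem i v : has_endpoint i v -> i \in endpoints v.
Proof.
move=> [j [hj hi]]; apply/flattenP; exists (triple_endpoints (tr v j)).
  exact/map_f/mem_nth.
by case: hi => [[_ [->|->]]|[[_ [->|->]]|[_ [->|->]]]]; rewrite !inE eqxx ?orbT.
Qed.

Theorem lemma9 (Sigma : Type) (A : nat -> Sigma) (R : Sigma -> Sigma -> Prop)
    (n B : nat) (hB : 1 <= B) :
  (forall (i : nat) (v : seq triple), 1 <= i <= n -> inV A R n B v ->
     (~ exists u, Vminus A R n B v u /\ inS A R n B i u) \/
     (~ exists u, Vplus A R n B v u /\ inS A R n B i u) \/
     inS A R n B i v) /\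
  (forall v : seq triple, inV A R n B v ->
     forall s : seq nat, uniq s ->
       (forall i, i \in s ->
          [/\ 1 <= i <= n,
              (exists u, Vminus A R n B v u /\ inS A R n B i u) &
              (exists u, Vplus A R n B v u /\ inS A R n B i u)]) ->
       size s <= 6 * B).
Proof.
split=> [i v _ hv | v hv s us hs].
  case: (classic (exists u, Vminus A R n B v u /\ inS A R n B i u))
    => [[u [hvu hiu]]|]; last by left.
  case: (classic (exists w, Vplus A R n B v w /\ inS A R n B i w))
    => [[w [hvw hiw]]|]; last by right; left.
  by right; right; exact: inS_between hv hvu hiu hvw hiw.
have sub : {subset s <= endpoints v}.
  move=> i /hs [_ [u [hvu hiu]] [w [hvw hiw]]].
  by have [_ hi] := inS_between hv hvu hiu hvw hiw; exact: has_endpoint_mem.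
apply: leq_trans (uniq_leq_size us sub) _.
by rewrite size_endpoints leq_mul2l; case: hv => /andP[_ ->].
Qed.
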